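(* Let $k$ be a field, let $\mathcal{D}$ be an admissible subcategory of the biset category $\mathcal{C}_k$, and let $F$ be a finitely generated $k$-linear functor $\mathcal{D}\to k\text{-}\mathrm{Mod}$. Let $G$ be an object of $\mathcal{D}$, and regard $F(G)$ as a module over $\mathrm{End}_{\mathcal{D}}(G)$. Then: (1) $\mathrm{Rad}(F(G))\subseteq [\mathrm{Rad}(F)](G)$; (2) if none of the simple quotients of $F$ vanishes at $G$ (i.e. $S(G)\neq 0$ for every simple quotient functor $S$ of $F$), then $\mathrm{Rad}(F(G))=[\mathrm{Rad}(F)](G)$.
   Context: The biset category $\mathcal{C}_k$ has finite groups as objects; the morphisms from $H$ to $K$ form the $k$-vector space $kB(K,H)=k\otimes_{\mathbb{Z}}B(K,H)$, where $B(K,H)$ is the Grothendieck group of finite $(K,H)$-bisets, with composition induced by the tensor product of bisets $V\times_H U$. An admissible subcategory is a subcategory of $\mathcal{C}_k$ in the sense of Bouc's book ''Biset functors for finite groups'' (Definition 4.1.3); it is a skeletally small $k$-linear category. A (biset) functor on $\mathcal{D}$ is a $k$-linear functor $\mathcal{D}\to k\text{-}\mathrm{Mod}$; these form an abelian category $\mathcal{F}_{\mathcal{D},k}$. A functor is finitely generated if it is a quotient of a finite direct sum of representable functors $\mathrm{Hom}_{\mathcal{D}}(X,-)$. $\mathrm{Rad}(F)$ denotes the intersection of all maximal subfunctors of $F$, and $\mathrm{Rad}(M)$ for a module $M$ is the intersection of its maximal submodules. The value $F(G)$ is naturally an $\mathrm{End}_{\mathcal{D}}(G)$-module, and for a subfunctor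 $M\subseteq F$, $M(G)$ is a submodule of $F(G)$. *)

From HB Require Import structures.
From mathcomp Require Import all_boot all_algebra.
Set Implicit Arguments. Unset Strict Implicit. Unset Printing Implicit Defensive.
Import GRing.Theory.
Local Open Scope ring_scope.

(* An admissible
   subcategory of the biset category C_k is such a category. *)
Record klinCat (k : fieldType) := KLinCat {
  cObj : Type;
  cHom : cObj -> cObj -> lmodType k;
  ccomp : forall X Y Z : cObj, cHom Y Z -> cHom X Y -> cHom X Z;
  cid : forall X : cObj, cHom X X;
  ccompDl : forall X Y Z (a : k) (f g : cHom Y Z) (h : cHom X Y),
      ccomp (a *: f + g) h = a *: ccomp f h + ccomp g h;
  ccompDr : forall X Y Z (a : k) (f : cHom Y Z) (g h : cHom X Y),
      ccomp f (a *: g + h) = a *: ccomp f g + ccomp f h;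
  ccompA : forall W X Y Z (f : cHom Y Z) (g : cHom X Y) (h : cHom W X),
      ccomp f (ccomp g h) = ccomp (ccomp f g) h;
  ccomp1l : forall X Y (f : cHom X Y), ccomp (cid Y) f = f;
  ccomp1r : forall X Y (f : cHom X Y), ccomp f (cid X) = f
}.

Arguments ccomp {k} k0 {X Y Z} : rename.
Arguments cid {k} k0 X : rename.
Arguments cHom {k} k0 X Y : rename.


Record klinFun (k : fieldType) (D : klinCat k) := KLinFun {
  fob : cObj D -> lmodType k;
  fmap : forall X Y : cObj D, cHom D X Y -> fob X -> fob Y;
  fmapD : forall X Y (a : k) (f g : cHom D X Y) (x : fob X),
      fmap (a *: f + g) x = a *: fmap f x + fmap g x;
  fmap_lin : forall X Y (f : cHom D X Y) (a : k) (x y : fob X),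
      fmap f (a *: x + y) = a *: fmap f x + fmap f y;
  fmapM : forall X Y Z (g : cHom D Y Z) (f : cHom D X Y) (x : fob X),
      fmap (ccomp D g f) x = fmap g (fmap f x);
  fmap1 : forall X (x : fob X), fmap (cid D X) x = x
}.

Arguments fob {k D} F X : rename.
Arguments fmap {k D} F {X Y} : rename.

Section FunctorNotions.
Variables (k : fieldType) (D : klinCat k).

Definition nattrans (F S : klinFun D) (eta : forall X, fob F X -> fob S X) :=
  (forall X (a : k) (x y : fob F X), eta X (a *: x + y) = a *: eta X x + eta X y) /\
  (forall X Y (f : cHom D X Y) (x : fob F X), eta Y (fmap F f x) = fmap S f (eta X x)).

Definition epi_nattrans (F S : klinFun D) (eta : forall X, fob F X -> fob S X) :=
  nattrans eta /\ (forall X (y : fob S X), exists x, eta X x = y).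

Definition subfunctor (F : klinFun D) (M : forall X, fob F X -> Prop) :=
  (forall X, M X 0) /\
  (forall X (a : k) (x y : fob F X), M X x -> M X y -> M X (a *: x + y)) /\
  (forall X Y (f : cHom D X Y) (x : fob F X), M X x -> M Y (fmap F f x)).

Definition maximal_subfunctor (F : klinFun D) (M : forall X, fob F X -> Prop) :=
  subfunctor M /\ (exists X (x : fob F X), ~ M X x) /\
  (forall N : forall X, fob F X -> Prop, subfunctor N ->
     (forall X x, M X x -> N X x) ->
     (forall X x, N X x <-> M X x) \/ (forall X x, N X x)).

Definition radF (F : klinFun D) (X : cObj D) (x : fob F X) : Prop :=
  forall M, maximal_subfunctor M -> M X x.

Definition simple_functor (S : klinFun D) :=
  (exists X (x : fob S X), x != 0) /\
  (forall N : forall X, fob S X -> Prop, subfunctor N ->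
     (forall X x, N X x -> x = 0) \/ (forall X x, N X x)).

(* Finitely generated: quotient of a finite direct sum of representable
   functors Hom_D(X_i, -), i < n. *)
Definition fin_gen (F : klinFun D) :=
  exists (n : nat) (Xs : 'I_n -> cObj D)
         (eta : forall Y, (forall i : 'I_n, cHom D (Xs i) Y) -> fob F Y),
    (forall Y (a : k) (fs gs : forall i : 'I_n, cHom D (Xs i) Y),
        eta Y (fun i => a *: fs i + gs i) = a *: eta Y fs + eta Y gs) /\
    (forall Y Z (g : cHom D Y Z) (fs : forall i : 'I_n, cHom D (Xs i) Y),
        eta Z (fun i => ccomp D g (fs i)) = fmap F g (eta Y fs)) /\
    (forall Y (y : fob F Y), exists fs, eta Y fs = y).

Definition End_submodule (F : klinFun D) (G : cObj D) (N : fob F G -> Prop) :=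
  N 0 /\ (forall x y, N x -> N y -> N (x - y)) /\
  (forall (e : cHom D G G) x, N x -> N (fmap F e x)).

Definition End_maximal_submodule (F : klinFun D) (G : cObj D) (N : fob F G -> Prop) :=
  End_submodule N /\ (exists x, ~ N x) /\
  (forall N' : fob F G -> Prop, End_submodule N' -> (forall x, N x -> N' x) ->
     (forall x, N' x <-> N x) \/ (forall x, N' x)).

Definition radM (F : klinFun D) (G : cObj D) (x : fob F G) : Prop :=
  forall N, End_maximal_submodule N -> N x.

End FunctorNotions.

(* For an End(G)-submodule N of F(G), the elements x of F(X) whose images f x,
   f : X -> G, all lie in N form the largest subfunctor with value N at G.
   Hence for a maximal subfunctor M, either M(G) = F(G) or M(G) is a maximal
   submodule of F(G), which gives Rad(F(G)) <= Rad(F)(G).  Conversely, for a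
   maximal submodule N, finite generation of F lets Zorn's lemma enlarge this
   largest subfunctor to a maximal subfunctor M with N <= M(G); then
   M(G) = F(G) is impossible since the simple quotient F/M would vanish at G,
   so M(G) = N. *)

From Pilot Require Import Defs.
From HB Require Import structures.
From mathcomp Require Import all_boot all_algebra generic_quotient.
From mathcomp Require Import boolp classical_sets.
Set Implicit Arguments. Unset Strict Implicit. Unset Printing Implicit Defensive.
Import GRing.Theory.
Local Open Scope ring_scope.
Local Open Scope quotient_scope.

Definition subspace (k : fieldType) (V : lmodType k) (M : V -> Prop) :=
  M 0 /\ forall a x y, M x -> M y -> M (a *: x + y).

Section QuotientModule.
Variables (k : fieldType) (V : lmodType k) (M : V -> Prop).
Hypothesis subM : subspace M.

Lemma subspaceZ a x : M x -> M (a *: x).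
Proof. by case: subM => M0 Ml Mx; have := Ml a _ _ Mx M0; rewrite addr0. Qed.

Lemma subspaceN x : M x -> M (- x).
Proof. by move=> /(subspaceZ (-1)); rewrite scaleN1r. Qed.

Lemma subspaceD x y : M x -> M y -> M (x + y).
Proof. by case: subM => _ Ml Mx My; have := Ml 1 _ _ Mx My; rewrite scale1r. Qed.

Definition modsub (x y : V) := `[< M (x - y) >].

Lemma modsub_equiv : equiv_class_of modsub.
Proof.
split=> [x|x y|y x z] /=; rewrite /modsub.
- by rewrite subrr; apply/asboolP; case: subM.
- by apply/asboolP/asboolP => /subspaceN; rewrite opprB.
- move=> /asboolP Mxy /asboolP Myz; apply/asboolP.
  by have := subspaceD Mxy Myz; rewrite addrA subrK.
Qed.

Canonical modsub_equiv_rel := EquivRelPack modsub_equiv.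
Canonical modsub_encModRel := defaultEncModRel modsub.

Definition quotmod := {eq_quot modsub}.
HB.instance Definition _ : EqQuotient V modsub quotmod := EqQuotient.on quotmod.
HB.instance Definition _ := Choice.on quotmod.

Lemma eqmod_subspace x y : (x = y %[mod quotmod]) <-> M (x - y).
Proof. by split=> [/eqquotP/asboolP|Mxy]; last by apply/eqquotP; apply/asboolP. Qed.

Definition qzero : quotmod := lift_cst quotmod 0.
Definition qadd := lift_op2 quotmod +%R.
Definition qopp := lift_op1 quotmod -%R.
Definition qscale (a : k) := lift_op1 quotmod ( *:%R a).
Canonical pi_qzero_morph := PiConst qzero.

Lemma pi_qopp : {morph \pi_quotmod : x / - x >-> qopp x}.
Proof.
move=> x; unlock qopp; apply/eqmod_subspace.
by rewrite -opprD; apply/subspaceN/eqmod_subspace; rewrite reprK.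
Qed.
Canonical pi_qopp_morph := PiMorph1 pi_qopp.

Lemma pi_qadd : {morph \pi_quotmod : x y / x + y >-> qadd x y}.
Proof.
move=> x y; unlock qadd; apply/eqmod_subspace; rewrite opprD addrACA.
by apply: subspaceD; apply/eqmod_subspace; rewrite reprK.
Qed.
Canonical pi_qadd_morph := PiMorph2 pi_qadd.

Lemma pi_qscale a : {morph \pi_quotmod : x / a *: x >-> qscale a x}.
Proof.
move=> x; unlock qscale; apply/eqmod_subspace; rewrite -scalerBr.
by apply/subspaceZ/eqmod_subspace; rewrite reprK.
Qed.
Canonical pi_qscale_morph a := PiMorph1 (pi_qscale a).

Lemma qaddA : associative qadd.
Proof. by move=> x y z; rewrite -[x]reprK -[y]reprK -[z]reprK !piE addrA. Qed.
Lemma qaddC : commutative qadd.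
Proof. by move=> x y; rewrite -[x]reprK -[y]reprK !piE addrC. Qed.
Lemma qadd0 : left_id qzero qadd.
Proof. by move=> x; rewrite -[x]reprK !piE add0r. Qed.
Lemma qaddN : left_inverse qzero qopp qadd.
Proof. by move=> x; rewrite -[x]reprK !piE addNr. Qed.
HB.instance Definition _ := GRing.isZmodule.Build quotmod qaddA qaddC qadd0 qaddN.

Lemma qscaleA a b x : qscale a (qscale b x) = qscale (a * b) x.
Proof. by rewrite -[x]reprK !piE scalerA. Qed.
Lemma qscale1 : left_id 1 qscale.
Proof. by move=> x; rewrite -[x]reprK !piE scale1r. Qed.
Lemma qscaleDr : right_distributive qscale +%R.
Proof. by move=> a x y; rewrite -[x]reprK -[y]reprK !piE scalerDr. Qed.
Lemma qscaleDl x : {morph qscale^~ x : a b / a + b}.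
Proof. by move=> a b; rewrite -[x]reprK !piE scalerDl. Qed.
HB.instance Definition _ :=
  GRing.Zmodule_isLmodule.Build k quotmod qscaleA qscale1 qscaleDr qscaleDl.

Lemma pi_linear : linear \pi_quotmod.
Proof. by move=> a x y; rewrite !piE. Qed.

Lemma pi_eq0 x : \pi_quotmod x = 0 <-> M x.
Proof. have -> : 0 = \pi_quotmod 0 by rewrite piE. by rewrite eqmod_subspace subr0. Qed.
End QuotientModule.

HB.instance Definition _ (k : fieldType) (D : klinCat k) (F : klinFun D) X Y
    (f : cHom D X Y) :=
  GRing.isLinear.Build k (fob F X) (fob F Y) *:%R (fmap F f) (@fmap_lin _ _ F X Y f).

HB.instance Definition _ (k : fieldType) (D : klinCat k) X Y Z (f : cHom D Y Z) :=
  GRing.isLinear.Build k (cHom D X Y) (cHom D X Z) *:%R (ccomp D f)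
    (@ccompDr _ D X Y Z^~ f).

Section Subfunctors.
Variables (k : fieldType) (D : klinCat k) (F : klinFun D).
Local Notation family := (forall X, fob F X -> Prop).

Definition proper_subfunctor (M : family) := subfunctor M /\ exists X x, ~ M X x.

Lemma fmap0l X Y (x : fob F X) : fmap F (0 : cHom D X Y) x = 0.
Proof.
have := fmapD 1 (0 : cHom D X Y) 0 x; rewrite !scale1r addr0.
by move/(congr1 (fun z => z - fmap F 0 x)); rewrite subrr addrK => <-.
Qed.

Lemma fmapZl X Y a (f : cHom D X Y) x : fmap F (a *: f) x = a *: fmap F f x.
Proof. by have := fmapD a f 0 x; rewrite addr0 fmap0l addr0. Qed.

Lemma subfunctor_subspace (M : family) : subfunctor M -> forall X, subspace (M X).
Proof. by case=> M0 [Ml _] X; split; [apply: M0 | apply: Ml]. Qed.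

Lemma subfunctor_ext (M N : family) :
  (forall X x, M X x <-> N X x) -> subfunctor M -> subfunctor N.
Proof.
move=> MN [M0 [Ml Mf]]; split; first by move=> X; apply/MN.
split; first by move=> X a x y /MN Mx /MN My; apply/MN; apply: Ml.
by move=> X Y f x /MN Mx; apply/MN; apply: Mf.
Qed.

Lemma proper_subfunctor_ext (M N : family) :
  (forall X x, M X x <-> N X x) -> proper_subfunctor M -> proper_subfunctor N.
Proof.
move=> MN [subM [X [x Mx]]]; split; first exact: subfunctor_ext subM.
by exists X, x => /MN.
Qed.

Section AtObject.
Variable G : cObj D.

Lemma End_submodule_subspace (N : fob F G -> Prop) :
  End_submodule N -> subspace N.
Proof.
move=> [N0 [NB Ne]]; split=> // a x y Nx Ny.
have Nax : N (a *: x) by rewrite -(fmap1 x) -fmapZl; apply: Ne.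
have Nny : N (- y) by rewrite -sub0r; apply: NB.
by rewrite -[y]opprK; apply: NB.
Qed.

Lemma subfunctor_End_submodule (M : family) : subfunctor M -> End_submodule (M G).
Proof.
move=> subM; have subMG := subfunctor_subspace subM G.
split; first exact: (proj1 subMG).
split; last by move=> e x; apply: (proj2 (proj2 subM)).
by move=> x y Mx My; exact: (subspaceD subMG Mx (subspaceN subMG My)).
Qed.

Definition fcore (N : fob F G -> Prop) : family :=
  fun X y => forall f : cHom D X G, N (fmap F f y).
Arguments fcore N X y : clear implicits.

Variable N : fob F G -> Prop.
Hypothesis subN : End_submodule N.

Lemma subfunctor_fcore : subfunctor (fcore N).
Proof.
have [N0 Nl] := End_submodule_subspace subN.
split; first by move=> X f; rewrite linear0.
split; first by move=> X a x y Nx Ny f; rewrite linearP; exact: Nl (Nx f) (Ny f).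
by move=> X Y f x Nx g; rewrite -fmapM.
Qed.

Lemma fcoreG y : fcore N G y <-> N y.
Proof.
split; first by move=> /(_ (Defs.cid D G)); rewrite fmap1.
by move=> Ny f; apply: (proj2 (proj2 subN)).
Qed.

Lemma fcore_max (M : family) : subfunctor M -> (forall y, M G y -> N y) ->
  forall X x, M X x -> fcore N X x.
Proof. by move=> [_ [_ Mf]] MN X x Mx f; apply/MN/Mf. Qed.

End AtObject.

Lemma maximal_subfunctor_End_maximal G (M : family) :
  maximal_subfunctor M -> (exists y, ~ M G y) -> End_maximal_submodule (M G).
Proof.
move=> [subM [_ maxM]] properMG; split; first exact: subfunctor_End_submodule.
split=> // N subN MN.
have [eqN|allN] := maxM _ (subfunctor_fcore subN) (fcore_max subM MN).
  by left=> y; rewrite -(fcoreG subN) eqN.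
by right=> y; rewrite -(fcoreG subN).
Qed.

Lemma radM_radF G (x : fob F G) : radM x -> radF x.
Proof.
move=> radx M maxM; have [allMG|] := pselect (forall y, M G y); first exact: allMG.
by move/existsNP/(maximal_subfunctor_End_maximal maxM); apply: radx.
Qed.

Section QuotientFunctor.
Variable M : family.
Arguments M : clear implicits.
Hypothesis subM : subfunctor M.

Definition qfob X : lmodType k := quotmod (subfunctor_subspace subM X).
Definition qproj X : fob F X -> qfob X := \pi.
Definition qfmap X Y (f : cHom D X Y) (q : qfob X) : qfob Y :=
  qproj (fmap F f (repr q)).

Lemma qproj_linear X : linear (@qproj X).
Proof. exact: pi_linear. Qed.

Lemma qproj_eq0 X x : qproj x = 0 :> qfob X <-> M X x.
Proof. exact: pi_eq0. Qed.

Lemma qfmap_qproj X Y (f : cHom D X Y) x : qfmap f (qproj x) = qproj (fmap F f x).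
Proof.
apply/(eqmod_subspace (subfunctor_subspace subM Y)).
rewrite -linearB; apply: (proj2 (proj2 subM)).
by apply/(eqmod_subspace (subfunctor_subspace subM X)); rewrite reprK.
Qed.

Lemma qproj_surj X (q : qfob X) : exists x, qproj x = q.
Proof. by exists (repr q); rewrite /qproj reprK. Qed.

Lemma qfmapD X Y a (f g : cHom D X Y) q :
  qfmap (a *: f + g) q = a *: qfmap f q + qfmap g q.
Proof. by rewrite /qfmap fmapD qproj_linear. Qed.

Lemma qfmap_linear X Y (f : cHom D X Y) : linear (qfmap f).
Proof.
move=> a p q; have [x <-] := qproj_surj p; have [y <-] := qproj_surj q.
by rewrite -qproj_linear !qfmap_qproj linearP qproj_linear.
Qed.

Lemma qfmapM X Y Z (g : cHom D Y Z) (f : cHom D X Y) q :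
  qfmap (ccomp D g f) q = qfmap g (qfmap f q).
Proof. by have [x <-] := qproj_surj q; rewrite !qfmap_qproj fmapM. Qed.

Lemma qfmap1 X q : qfmap (Defs.cid D X) q = q.
Proof. by have [x <-] := qproj_surj q; rewrite qfmap_qproj fmap1. Qed.

Definition quotient_functor : klinFun D :=
  KLinFun qfmapD qfmap_linear qfmapM qfmap1.

Lemma epi_qproj : @epi_nattrans _ _ F quotient_functor qproj.
Proof.
split; last exact: qproj_surj.
by split=> [X|X Y f x]; [exact: qproj_linear | rewrite /= qfmap_qproj].
Qed.

Lemma quotient_functor_simple :
  maximal_subfunctor M -> simple_functor quotient_functor.
Proof.
move=> [_ [[X0 [x0 Mx0]] maxM]]; split.
  by exists X0, (qproj x0); apply/eqP => /qproj_eq0.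
move=> N [N0 [Nl Nf]].
pose R X x := N X (qproj x).
have subR : subfunctor R.
  split; first by move=> X; rewrite /R (proj2 (qproj_eq0 _) (proj1 subM X)).
  split; first by move=> X a x y Nx Ny; rewrite /R qproj_linear; apply: Nl.
  by move=> X Y f x Nx; rewrite /R -qfmap_qproj; apply: (Nf _ _ f).
have MR X x : M X x -> R X x by move=> /qproj_eq0; rewrite /R => ->.
have [eqR|allR] := maxM R subR MR; [left|right] => X q; have [x <-] := qproj_surj q.
- by move=> /eqR /qproj_eq0.
- exact: allR.
Qed.
End QuotientFunctor.

Section Generators.
Variables (n : nat) (Xs : 'I_n -> cObj D).
Variable eta : forall Y, (forall i, cHom D (Xs i) Y) -> fob F Y.
Hypothesis eta_lin : forall Y a (fs gs : forall i, cHom D (Xs i) Y),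
  eta (fun i => a *: fs i + gs i) = a *: eta fs + eta gs.
Hypothesis eta_nat : forall Y Z (g : cHom D Y Z) (fs : forall i, cHom D (Xs i) Y),
  eta (fun i => ccomp D g (fs i)) = fmap F g (eta fs).

Definition delta_hom (i j : 'I_n) : cHom D (Xs j) (Xs i) :=
  if j =P i is ReflectT e then ecast i (cHom D (Xs j) (Xs i)) e (Defs.cid D (Xs j))
  else 0.

Definition restrict (s : seq 'I_n) Y (fs : forall i, cHom D (Xs i) Y) i :=
  if i \in s then fs i else 0.

Lemma restrict_cons Y (fs : forall i, cHom D (Xs i) Y) i s : i \notin s ->
  restrict (i :: s) fs = fun j => ccomp D (fs i) (delta_hom i j) + restrict s fs j.
Proof.
move=> s'i; apply: functional_extensionality_dep => j.
rewrite /restrict /delta_hom in_cons; case: (j =P i) => [eji | _] /=.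
  by subst j; rewrite (negbTE s'i) addr0 ccomp1r.
by rewrite linear0 add0r.
Qed.

Lemma eta_add Y (fs gs : forall i, cHom D (Xs i) Y) :
  eta (fun i => fs i + gs i) = eta fs + eta gs.
Proof.
rewrite -[eta fs]scale1r -eta_lin; congr eta.
by apply: functional_extensionality_dep => i; rewrite scale1r.
Qed.

Lemma eta0 Y : eta (fun i => 0 : cHom D (Xs i) Y) = 0.
Proof.
apply: (@addrI _ (eta (fun i => 0 : cHom D (Xs i) Y))); rewrite -eta_add addr0.
by congr eta; apply: functional_extensionality_dep => i; rewrite addr0.
Qed.

Lemma eta_generated (Q : family) : subfunctor Q ->
  (forall i, Q (Xs i) (eta (delta_hom i))) -> forall Y fs, Q Y (eta fs).
Proof.
move=> [Q0 [Ql Qf]] Qgen Y fs.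
have Qrestrict s : uniq s -> Q Y (eta (restrict s fs)).
  elim: s => [_ | i s IHs /= /andP [s'i uniq_s]].
    by rewrite [restrict _ _](_ : _ = fun _ => 0) ?eta0.
  rewrite restrict_cons // eta_add eta_nat -[fmap _ _ _]scale1r.
  by apply: Ql; [apply: Qf | apply: IHs].
rewrite (_ : fs = restrict (enum 'I_n) fs); first exact/Qrestrict/enum_uniq.
by apply: functional_extensionality_dep => i; rewrite /restrict mem_enum.
Qed.

End Generators.

Lemma fin_gen_generators : fin_gen F ->
  exists n (Xs : 'I_n -> cObj D) (gs : forall i, fob F (Xs i)),
    forall Q : family, subfunctor Q -> (forall i, Q (Xs i) (gs i)) -> forall X x, Q X x.
Proof.
move=> [n [Xs [eta [eta_lin [eta_nat eta_surj]]]]].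
exists n, Xs, (fun i => eta (Xs i) (delta_hom Xs i)) => Q subQ Qgen X x.
have [fs <-] := eta_surj X x.
exact: (eta_generated eta_lin eta_nat subQ Qgen).
Qed.

Section FinitelyGenerated.
Hypothesis fgF : fin_gen F.

Lemma directed_union_proper (I : Type) (Ms : I -> family) : I ->
  (forall i j, exists l, (forall X x, Ms i X x -> Ms l X x) /\
                         (forall X x, Ms j X x -> Ms l X x)) ->
  (forall i, proper_subfunctor (Ms i)) ->
  proper_subfunctor (fun X x => exists i, Ms i X x).
Proof.
move=> i0 dirMs properMs; have subMs i := proj1 (properMs i).
split.
  split; first by move=> X; exists i0; apply: (proj1 (subMs i0)).
  split=> [X a x y [i Mx] [j My] | X Y f x [i Mx]].
    have [l [il jl]] := dirMs i j.
    by exists l; apply: (proj1 (proj2 (subMs l))); [apply: il | apply: jl].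
  by exists i; apply: (proj2 (proj2 (subMs i))).
apply: contrapT => not_proper.
have all_in X x : exists i, Ms i X x.
  by apply: contrapT => x_out; apply: not_proper; exists X, x.
have [n [Xs [gs gen]]] := fin_gen_generators fgF.
have bound (s : seq 'I_n) : exists l, forall j, j \in s -> Ms l (Xs j) (gs j).
  elim: s => [|j s [l sl]]; first by exists i0.
  have [i Mj] := all_in _ (gs j); have [m [lm im]] := dirMs l i.
  by exists m => j'; rewrite in_cons => /orP [/eqP -> | /sl /lm //]; apply: im.
have [l enum_l] := bound (enum 'I_n).
have [_ [X [x Mx]]] := properMs l.
by apply: Mx; apply: gen (subMs l) _ X x => j; apply: enum_l; rewrite mem_enum.
Qed.

Section ZornExtension.
Variable P : family.
Arguments P : clear implicits.
Hypothesis properP : proper_subfunctor P.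
Local Notation elements := {X : cObj D & fob F X}.

(* Zorn's lemma is applied to sets [A] of elements adjoined to [P], so that the
   empty chain has an upper bound. *)
Definition adjoin (A : set elements) : family := fun X x => P X x \/ A (existT _ X x).
Arguments adjoin A X x : clear implicits.

Lemma adjoinS (A B : set elements) :
  (A `<=` B)%classic -> forall X x, adjoin A X x -> adjoin B X x.
Proof. by move=> AB X x [Px | Ax]; [left | right; apply: AB]. Qed.

Lemma proper_adjoin_bigcup (As : set (set elements)) :
  (forall A, As A -> proper_subfunctor (adjoin A)) -> total_on As subset ->
  proper_subfunctor (adjoin (\bigcup_(A in As) A)%classic).
Proof.
move=> As_proper As_total.
pose I := {A | A = set0 \/ As A}; pose empty : I := exist _ set0 (or_introl erefl).
have properI (A : I) : proper_subfunctor (adjoin (sval A)).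
  case: A => A [eA | AsA] /=; last exact: As_proper.
  rewrite eA; apply: proper_subfunctor_ext properP.
  by move=> X x; split; [left | case].
have dirI (A B : I) : exists C : I, (forall X x, adjoin (sval A) X x -> adjoin (sval C) X x)
                            /\ (forall X x, adjoin (sval B) X x -> adjoin (sval C) X x).
  case: A B => [A [eA | AsA]] [B [eB | AsB]] /=.
  - by exists empty; rewrite eA eB.
  - by exists (exist _ B (or_intror AsB)); split; apply: adjoinS; rewrite ?eA //; apply: sub0set.
  - by exists (exist _ A (or_intror AsA)); split; apply: adjoinS; rewrite ?eB //; apply: sub0set.
  - have [AB | BA] := As_total _ _ AsA AsB;
      [exists (exist _ B (or_intror AsB)) | exists (exist _ A (or_intror AsA))];
      by split; apply: adjoinS.
apply: proper_subfunctor_ext (directed_union_proper empty dirI properI).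
move=> X x; split=> [[[A AsA] /= [Px | Ax]] | [Px | [A AsA Ax]]].
- by left.
- by right; case: AsA Ax => [-> | AsA Ax] //; exists A.
- by exists empty; left.
- by exists (exist _ A (or_intror AsA)); right.
Qed.

Lemma maximal_adjoin (A : set elements) : proper_subfunctor (adjoin A) ->
  (forall B, (A `<` B)%classic -> ~ proper_subfunctor (adjoin B)) ->
  maximal_subfunctor (adjoin A).
Proof.
move=> [subA properA] maxA; do 2!split=> //.
move=> N subN AN; have [allN | properN] := pselect (forall X x, N X x); first by right.
left=> X x; split; last exact: AN.
pose B : set elements := fun t => N (projT1 t) (projT2 t).
have NB Y y : N Y y <-> adjoin B Y y.
  by split=> [Ny | [Py | //]]; [right | apply: AN; left].
have properB : proper_subfunctor (adjoin B).
  apply: proper_subfunctor_ext NB _; split=> //.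
  apply: contrapT => N_full; apply: properN => Y y.
  by apply: contrapT => Ny; apply: N_full; exists Y, y.
move=> Nx; right; apply: contrapT => A'x.
apply: (maxA B _ properB); split=> [[Y y] Ay | BA]; last exact/A'x/BA.
by apply: AN; right.
Qed.

Lemma maximal_subfunctor_above :
  exists M, maximal_subfunctor M /\ forall X x, P X x -> M X x.
Proof.
have [A [properA maxA]] := Zorn_bigcup proper_adjoin_bigcup.
by exists (adjoin A); split; [exact: maximal_adjoin | left].
Qed.

End ZornExtension.

End FinitelyGenerated.

End Subfunctors.

Theorem proposition1p1 (k : fieldType) (D : klinCat k) (F : klinFun D) (G : cObj D) :
  fin_gen F ->
  (forall x : fob F G, radM x -> radF x) /\
  ((forall (S : klinFun D) (eta : forall X, fob F X -> fob S X),
       simple_functor S -> epi_nattrans eta -> exists x : fob S G, x != 0) ->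
   forall x : fob F G, radM x <-> radF x).
Proof.
move=> fgF; split=> [x | no_vanishing x]; first exact: radM_radF.
split=> [|radFx N [subN [[y0 Ny0] maxN]]]; first exact: radM_radF.
have properN : proper_subfunctor (fcore N).
  by split; [exact: subfunctor_fcore | exists G, y0 => /(fcoreG subN)].
have [M [maxM coreM]] := maximal_subfunctor_above fgF properN.
have subM := proj1 maxM.
have NM y : N y -> M G y by move=> /(fcoreG subN)/coreM.
have [eqMN | allM] := maxN _ (subfunctor_End_submodule G subM) NM.
  by apply/eqMN; apply: radFx.
have [s] := no_vanishing _ _ (quotient_functor_simple subM maxM) (epi_qproj subM).
by have [y <-] := qproj_surj s; rewrite (proj2 (qproj_eq0 _ _) (allM y)) eqxx.
Qed.
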